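(* Let $c>0$ and let $F$ be defined by $$F(\theta)=\frac{\int_{0}^{\theta}\int_{0}^{\theta}e^{c\cos(a-b)}\,da\,db}{2\pi\int_{0}^{2\pi}e^{c\cos a}\,da}-\Big(\frac{\theta}{2\pi}\Big)^{2}.$$ Let $\theta_1,\theta_2,\theta_3\ge0$ with $\theta_1+\theta_2+\theta_3=2\pi$ and $\theta_i\le\pi$ for all $1\le i\le3$. Then $$-3F(2\pi/3)+\sum_{i=1}^3F(\theta_i)\le 0.158\Big(-1+\Big(1-\frac{3^{4/3}}{5}\Big)e^{-c\pi/2}+\frac{3^{4/3}}{5}e^{-c\pi/6}\Big)\sum_{i=1}^3\Big(\frac{\theta_i}{2\pi}-\frac13\Big)^2.$$
   Context: In the paper $c=\rho rs/(1-\rho^2)$ with $0<\rho<1$, $r,s>0$. *)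

From Stdlib Require Import Reals.
From Coquelicot Require Import Coquelicot.
Open Scope R_scope.

Definition F (c theta : R) : R :=
  RInt (fun a => RInt (fun b => exp (c * cos (a - b))) 0 theta) 0 theta
  / (2 * PI * RInt (fun a => exp (c * cos a)) 0 (2 * PI))
  - (theta / (2 * PI)) ^ 2.

From Stdlib Require Import Reals Lra QArith Qreals Qminmax List Factorial.
From Coquelicot Require Import Coquelicot.
Import ListNotations.
Open Scope R_scope.

(* Lemma 3.3. Write K u = e^(c cos u), Phi x = int_0^x K and Psi x = int_0^x Phi, so
   that F th = Psi th / (2 PI Phi PI) - (th / (2 PI))^2 (lemma F_Psi), and let
   alpha = 2 PI / 3. The proof has three parts.
   1. Psi_three_arcs: if 3 mu >= e^(-c/2) + 1/2 and 2 Psi PI - 3 Psi alpha <= 2 PI^2/3 mu,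
      then sum_i Psi ti - 3 Psi alpha <= mu sum_i (ti - alpha)^2. The second derivative
      K - 2 mu of Psi t - mu (t - alpha)^2 is nonincreasing on [0, PI], so a smoothing
      argument reduces to the configurations (t, PI - t/2, PI - t/2), and on this family
      the configuration t = alpha is the worst one.
   2. key_integral_bound: 2 Psi PI - 3 Psi alpha <= PI/3 (1 - m) Phi PI with
      m = min (0.1051 c, 0.158), by a calibration argument with explicit polynomial
      certificates; the polynomial inequalities involved, as well as 3.1415 < PI < 3.1416,
      are checked by exact rational interval arithmetic with bisection.
   3. With mu = (1 - m) Phi PI / (2 PI) both hypotheses of part 1 hold (Phi PI >= PI),
      which gives the inequality with constant m; the constant of the paper is <= m. *)

(* Polynomials with rational coefficients are lists, lowest degree first; [peval]
   is Horner evaluation at a real point. *)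
Fixpoint peval (p : list Q) (x : R) : R :=
  match p with nil => 0 | a :: q => Q2R a + x * peval q x end.

Fixpoint padd (p q : list Q) : list Q :=
  match p, q with
  | nil, _ => q
  | _, nil => p
  | a :: p', b :: q' => Qred (a + b) :: padd p' q'
  end.

Definition pscale (k : Q) (p : list Q) : list Q := map (fun a => Qred (k * a)) p.

Fixpoint pmul (p q : list Q) : list Q :=
  match p with nil => nil | a :: p' => padd (pscale a q) (0%Q :: pmul p' q) end.

(* Derivative, from (a + x q)' = q + x q'. *)
Fixpoint pderiv (p : list Q) : list Q :=
  match p with nil => nil | _ :: q => padd q (0%Q :: pderiv q) end.

Fixpoint pshift (p : list Q) (l : Q) : list Q :=
  match p with
  | nil => nil
  | a :: q => let q' := pshift q l in padd [a] (padd (pscale l q') (0%Q :: q'))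
  end.

Lemma peval_add p q x : peval (padd p q) x = peval p x + peval q x.
Proof.
  revert q; induction p as [|a p IH]; intros [|b q]; cbn [padd peval]; try ring.
  rewrite (Qeq_eqR _ _ (Qred_correct _)), Q2R_plus, IH; ring.
Qed.

Lemma peval_scale k p x : peval (pscale k p) x = Q2R k * peval p x.
Proof.
  induction p as [|a p IH]; cbn [pscale map peval]; [ring|].
  unfold pscale in IH; rewrite (Qeq_eqR _ _ (Qred_correct _)), Q2R_mult, IH; ring.
Qed.

Lemma peval_mul p q x : peval (pmul p q) x = peval p x * peval q x.
Proof.
  induction p as [|a p IH]; cbn [pmul peval]; [ring|].
  rewrite peval_add, peval_scale; cbn [peval]; rewrite IH, RMicromega.Q2R_0; ring.
Qed.

Lemma peval_shift p l s : peval (pshift p l) s = peval p (Q2R l + s).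
Proof.
  induction p as [|a q IH]; cbn [pshift peval]; [reflexivity|].
  rewrite !peval_add, peval_scale; cbn [peval]; rewrite IH, RMicromega.Q2R_0; ring.
Qed.

(* Reads off a derivative produced by [auto_derive], which eta-expands the function. *)
Lemma Derive_of (f : R -> R) x l : is_derive f x l -> Derive (fun y => f y) x = l.
Proof. apply is_derive_unique. Qed.

Lemma is_derive_peval p x : is_derive (peval p) x (peval (pderiv p) x).
Proof.
  induction p as [|a p IH]; cbn [pderiv peval].
  - apply (is_derive_const (K:=R_AbsRing) (V:=R_NormedModule)).
  - rewrite peval_add; cbn [peval]; rewrite RMicromega.Q2R_0.
    auto_derive; [exact (ex_intro _ _ IH)|].
    rewrite (Derive_of _ _ _ IH); ring.
Qed.

Ltac expand_peval H := rewrite ?peval_add, ?peval_scale, ?peval_mul in H; cbn [peval] in H.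

Fixpoint enclose (p : list Q) (l r : Q) : Q * Q :=
  match p with
  | nil => (0%Q, 0%Q)
  | a :: q => let (lo, hi) := enclose q l r in
      (Qred (a + Qmin (l * lo) (r * lo)), Qred (a + Qmax (l * hi) (r * hi)))
  end.

Lemma enclose_correct p l r x : 0 <= Q2R l -> Q2R l <= x <= Q2R r ->
  Q2R (fst (enclose p l r)) <= peval p x <= Q2R (snd (enclose p l r)).
Proof.
  intros Hl Hx; induction p as [|a q IH]; cbn [enclose peval fst snd].
  - rewrite RMicromega.Q2R_0; lra.
  - destruct (enclose q l r) as [lo hi]; cbn [fst snd] in *.
    rewrite !(Qeq_eqR _ _ (Qred_correct _)), !Q2R_plus.
    assert (Hlo : Q2R (Qmin (l * lo) (r * lo)) <= x * Q2R lo).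
    { destruct (Rle_dec 0 (Q2R lo));
        [eapply Rle_trans; [apply Qle_Rle, Q.le_min_l|]
        |eapply Rle_trans; [apply Qle_Rle, Q.le_min_r|]]; rewrite Q2R_mult; nra. }
    assert (Hhi : x * Q2R hi <= Q2R (Qmax (l * hi) (r * hi))).
    { destruct (Rle_dec 0 (Q2R hi));
        [eapply Rle_trans; [|apply Qle_Rle, Q.le_max_r]
        |eapply Rle_trans; [|apply Qle_Rle, Q.le_max_l]]; rewrite Q2R_mult; nra. }
    split; nra.
Qed.

(* The recursion is guarded by [if] so that call-by-value evaluation prunes it. *)
Definition enclosure_positive (p : list Q) (l r : Q) : bool :=
  negb (Qle_bool (fst (enclose (pshift p l) 0 (Qred (r - l)))) 0).

Fixpoint pos_check (n : nat) (p : list Q) (l r : Q) : bool :=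
  if enclosure_positive p l r then true else
  match n with
  | O => false
  | S n' => let m := Qred ((l + r) / 2) in
            if pos_check n' p l m then pos_check n' p m r else false
  end.

Lemma enclosure_positive_correct p l r : enclosure_positive p l r = true ->
  forall x, Q2R l <= x <= Q2R r -> 0 < peval p x.
Proof.
  intros H x Hx; apply Bool.negb_true_iff in H.
  assert (Hlo : (0 < fst (enclose (pshift p l) 0 (Qred (r - l))))%Q).
  { apply Qnot_le_lt; intro K; apply Qle_bool_iff in K; congruence. }
  apply Qlt_Rlt in Hlo; rewrite RMicromega.Q2R_0 in Hlo.
  assert (B := enclose_correct (pshift p l) 0 (Qred (r - l)) (x - Q2R l)).
  rewrite RMicromega.Q2R_0, (Qeq_eqR _ _ (Qred_correct _)), Q2R_minus, peval_shift in B.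
  replace (Q2R l + (x - Q2R l)) with x in B by ring.
  destruct B; lra.
Qed.

Lemma pos_check_correct n p l r : pos_check n p l r = true ->
  forall x, Q2R l <= x <= Q2R r -> 0 < peval p x.
Proof.
  revert l r; induction n as [|n IH]; intros l r H x Hx; cbn [pos_check] in H.
  all: destruct (enclosure_positive p l r) eqn:E;
    [exact (enclosure_positive_correct p l r E x Hx)|].
  - discriminate.
  - set (m := Qred ((l + r) / 2)) in H.
    destruct (pos_check n p l m) eqn:H1; [|discriminate].
    assert (Em : Q2R m = (Q2R l + Q2R r) / 2).
    { unfold m; rewrite (Qeq_eqR _ _ (Qred_correct _)), Q2R_div by discriminate.
      rewrite Q2R_plus; unfold Q2R at 3; simpl; field. }
    destruct (Rle_dec x (Q2R m)); [apply (IH l m H1)|apply (IH m r H)]; lra.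
Qed.

Fixpoint qfact (m : nat) : Q :=
  match m with O => 1%Q | S k => ((Z.of_nat (S k) # 1) * qfact k)%Q end.
Fixpoint qsign (i : nat) : Q := match i with O => 1%Q | S k => (- qsign k)%Q end.
Fixpoint monomial (k : nat) (a : Q) : list Q :=
  match k with O => [a] | S k' => 0%Q :: monomial k' a end.
Definition sin_coef (i : nat) : Q := (qsign i / qfact (2 * i + 1))%Q.
Fixpoint sin_poly (n : nat) : list Q :=
  match n with
  | O => monomial 1 (sin_coef 0)
  | S m => padd (sin_poly m) (monomial (2 * S m + 1) (sin_coef (S m)))
  end.

Lemma qfact_correct m : Q2R (qfact m) = INR (fact m).
Proof.
  induction m as [|m IH]; cbn [qfact].
  - unfold Q2R; simpl; field.
  - rewrite fact_simpl, mult_INR, Q2R_mult, IH; f_equal.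
    unfold Q2R; cbn [Qnum Qden].
    change (Z.pos (Pos.of_succ_nat m)) with (Z.of_nat (S m)).
    rewrite <- INR_IZR_INZ; field.
Qed.

Lemma qsign_correct i : Q2R (qsign i) = (-1) ^ i.
Proof.
  induction i as [|i IH]; cbn [qsign pow].
  - unfold Q2R; simpl; field.
  - rewrite Q2R_opp, IH; ring.
Qed.

Lemma peval_monomial k a x : peval (monomial k a) x = Q2R a * x ^ k.
Proof.
  induction k as [|k IH]; cbn [monomial peval pow];
    rewrite ?IH, ?RMicromega.Q2R_0; ring.
Qed.

Lemma peval_sin_poly n x : peval (sin_poly n) x = sin_approx x n.
Proof.
  assert (Hterm : forall i, peval (monomial (2 * i + 1) (sin_coef i)) x = sin_term x i).
  { intro i; rewrite peval_monomial; unfold sin_term, sin_coef.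
    assert (Hf : INR (fact (2 * i + 1)) <> 0) by apply INR_fact_neq_0.
    rewrite Q2R_div, qsign_correct, qfact_correct; [field; exact Hf|].
    intro E; apply Hf; rewrite <- qfact_correct, (Qeq_eqR _ _ E); apply RMicromega.Q2R_0. }
  unfold sin_approx; induction n as [|n IH]; cbn [sin_poly sum_f_R0].
  - exact (Hterm O).
  - rewrite peval_add, IH, Hterm; reflexivity.
Qed.

Lemma sin_taylor_bounds n x : 0 <= x <= 4 ->
  peval (sin_poly (2 * n + 1)) x <= sin x <= peval (sin_poly (2 * (n + 1))) x.
Proof. intros Hx; rewrite !peval_sin_poly; apply pre_sin_bound; lra. Qed.

Lemma pos_check_point p q : pos_check 0 p q q = true -> 0 < peval p (Q2R q).
Proof. intros H; apply (pos_check_correct 0 p q q H); lra. Qed.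

(* 3.1415 < PI < 3.1416: the sine of each bound has the sign predicted by its
   Taylor polynomials of degree 19 and 21. *)
Lemma PI_bounds : 3.1415 < PI < 3.1416.
Proof.
  pose proof PI2_3_2 as HPI2.
  split; apply Rnot_le_lt; intro H.
  - assert (Hs : sin 3.1415 <= 0).
    { destruct H as [H|H]; [apply Rlt_le, sin_lt_0; lra|rewrite <- H, sin_PI; lra]. }
    assert (Hp := pos_check_point (sin_poly 9) (31415 # 10000) ltac:(vm_compute; reflexivity)).
    assert (Hb := sin_taylor_bounds 4 3.1415 ltac:(lra)).
    simpl (2 * 4 + 1)%nat in Hb; lra.
  - assert (Hs : 0 <= sin 3.1416) by (apply sin_ge_0; lra).
    assert (Hp := pos_check_point (pscale (-1) (sin_poly 10)) (31416 # 10000)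
                    ltac:(vm_compute; reflexivity)).
    assert (Hb := sin_taylor_bounds 4 3.1416 ltac:(lra)).
    rewrite peval_scale in Hp; simpl (2 * (4 + 1))%nat in Hb.
    assert (Q2R (-1) = -1) by lra; lra.
Qed.

Lemma continuity_pt_of_derive (f : R -> R) (x l : R) : is_derive f x l -> continuity_pt f x.
Proof.
  intros H; apply continuity_pt_filterlim.
  apply (ex_derive_continuous (K:=R_AbsRing) (V:=R_NormedModule)); exists l; exact H.
Qed.

Lemma nonincreasing_of_deriv (f df : R -> R) (a b : R) : a <= b ->
  (forall x, a <= x <= b -> is_derive f x (df x)) ->
  (forall x, a <= x <= b -> df x <= 0) -> f b <= f a.
Proof.
  intros Hab Hd Hs.
  destruct (MVT_gen f a b df) as [x [Hx E]]; rewrite ?Rmin_left, ?Rmax_right in * by lra.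
  - intros x Hx; apply Hd; lra.
  - intros x Hx; apply (continuity_pt_of_derive f x (df x)), Hd; lra.
  - assert (df x <= 0) by (apply Hs; lra); nra.
Qed.

Lemma nondecreasing_of_deriv (f df : R -> R) (a b : R) : a <= b ->
  (forall x, a <= x <= b -> is_derive f x (df x)) ->
  (forall x, a <= x <= b -> 0 <= df x) -> f a <= f b.
Proof.
  intros Hab Hd Hs.
  enough (- f b <= - f a) by lra.
  apply (nonincreasing_of_deriv (fun x => - f x) (fun x => - df x) a b Hab).
  - intros x Hx; apply (is_derive_opp f x (df x)), Hd, Hx.
  - intros x Hx; specialize (Hs x Hx); lra.
Qed.

Lemma const_of_deriv_zero (f : R -> R) (a b : R) :
  (forall x, is_derive f x 0) -> f a = f b.
Proof.
  intros Hd.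
  assert (Hab : forall x y, x <= y -> f x = f y).
  { intros x y Hxy; apply Rle_antisym.
    - apply (nondecreasing_of_deriv f (fun _ => 0)); auto; intros; lra.
    - apply (nonincreasing_of_deriv f (fun _ => 0)); auto; intros; lra. }
  destruct (Rle_dec a b); [apply Hab; lra|symmetry; apply Hab; lra].
Qed.

Definition K (c u : R) : R := exp (c * cos u).
Definition Phi (c x : R) : R := RInt (K c) 0 x.
Definition Psi (c x : R) : R := RInt (Phi c) 0 x.

Lemma K_deriv c u : is_derive (K c) u (- c * sin u * K c u).
Proof. unfold K; auto_derive; [exact I|ring]. Qed.

Lemma K_cont c u : continuous (K c) u.
Proof.
  apply (ex_derive_continuous (K:=R_AbsRing) (V:=R_NormedModule)).
  eexists; apply K_deriv.
Qed.

Lemma K_pos c u : 0 < K c u.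
Proof. apply exp_pos. Qed.

Lemma exp_le_mono x y : x <= y -> exp x <= exp y.
Proof. intros [H|<-]; [apply Rlt_le, exp_increasing, H|lra]. Qed.

Lemma K_decreasing c x y : 0 < c -> 0 <= x -> x <= y -> y <= PI -> K c y <= K c x.
Proof.
  intros Hc Hx Hxy Hy; unfold K.
  apply exp_le_mono; destruct Hxy as [Hxy|<-]; [|lra].
  assert (cos y < cos x) by (apply cos_decreasing_1; lra); nra.
Qed.

Lemma is_derive_RInt0 (f : R -> R) x : (forall y, continuous f y) ->
  is_derive (fun z => RInt f 0 z) x (f x).
Proof.
  intros Hf; apply (is_derive_RInt f _ 0 x); [|apply Hf].
  apply filter_forall; intros b.
  apply (RInt_correct (V:=R_CompleteNormedModule)),
        (ex_RInt_continuous (V:=R_CompleteNormedModule)); intros; apply Hf.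
Qed.

Lemma Phi_deriv c x : is_derive (Phi c) x (K c x).
Proof. apply is_derive_RInt0, K_cont. Qed.

Lemma Phi_cont c x : continuous (Phi c) x.
Proof.
  apply (ex_derive_continuous (K:=R_AbsRing) (V:=R_NormedModule)).
  eexists; apply Phi_deriv.
Qed.

Lemma Psi_deriv c x : is_derive (Psi c) x (Phi c x).
Proof. apply is_derive_RInt0, Phi_cont. Qed.

Lemma Phi0 c : Phi c 0 = 0.
Proof. unfold Phi; rewrite RInt_point; reflexivity. Qed.

Lemma Psi0 c : Psi c 0 = 0.
Proof. unfold Psi; rewrite RInt_point; reflexivity. Qed.

(* Symmetries inherited from K(-u) = K(u) = K(2 PI - u). *)
Lemma Phi_odd c x : Phi c (- x) = - Phi c x.
Proof.
  enough (E : Phi c (- x) + Phi c x = Phi c (- 0) + Phi c 0)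
    by (rewrite Ropp_0, Phi0 in E; lra).
  apply (const_of_deriv_zero (fun y => Phi c (- y) + Phi c y)); intros y.
  replace 0 with (-1 * K c (- y) + K c y) by (unfold K; rewrite cos_neg; ring).
  apply (is_derive_plus (fun y => Phi c (- y)) (Phi c)); [|apply Phi_deriv].
  apply (is_derive_comp (Phi c) Ropp); [apply Phi_deriv|].
  auto_derive; [exact I|ring].
Qed.

Lemma Psi_even c x : Psi c (- x) = Psi c x.
Proof.
  enough (E : Psi c (- x) - Psi c x = Psi c (- 0) - Psi c 0)
    by (rewrite Ropp_0, Psi0 in E; lra).
  apply (const_of_deriv_zero (fun y => Psi c (- y) - Psi c y)); intros y.
  replace 0 with (-1 * Phi c (- y) - Phi c y) by (rewrite Phi_odd; ring).
  apply (is_derive_minus (fun y => Psi c (- y)) (Psi c)); [|apply Psi_deriv].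
  apply (is_derive_comp (Psi c) Ropp); [apply Psi_deriv|].
  auto_derive; [exact I|ring].
Qed.

Lemma Phi_2PI c : Phi c (2 * PI) = 2 * Phi c PI.
Proof.
  enough (E : Phi c (2 * PI - PI) + Phi c PI = Phi c (2 * PI - 0) + Phi c 0)
    by (rewrite Phi0 in E; replace (2 * PI - PI) with PI in E by ring;
        replace (2 * PI - 0) with (2 * PI) in E by ring; lra).
  apply (const_of_deriv_zero (fun y => Phi c (2 * PI - y) + Phi c y)); intros y.
  replace 0 with (-1 * K c (2 * PI - y) + K c y).
  2:{ unfold K; replace (2 * PI - y) with (- y + 2 * INR 1 * PI) by (simpl; ring).
      rewrite cos_period, cos_neg; ring. }
  apply (is_derive_plus (fun y => Phi c (2 * PI - y)) (Phi c)); [|apply Phi_deriv].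
  apply (is_derive_comp (Phi c) (fun y => 2 * PI - y)); [apply Phi_deriv|].
  auto_derive; [exact I|ring].
Qed.

(* Phi c PI >= PI, from e^t >= 1 + t and the vanishing of the integral of cos on [0, PI]. *)
Lemma Phi_PI_ge c : PI <= Phi c PI.
Proof.
  assert (H := nondecreasing_of_deriv (fun x => Phi c x - x - c * sin x)
                 (fun x => K c x - 1 - c * cos x) 0 PI).
  cbv beta in H; rewrite Phi0, sin_0, sin_PI in H.
  enough (0 - 0 - c * 0 <= Phi c PI - PI - c * 0) by lra.
  apply H.
  - pose proof PI_RGT_0; lra.
  - intros x _.
    apply (is_derive_minus (fun x => Phi c x - x) (fun x => c * sin x));
      [apply (is_derive_minus (Phi c) (fun x => x)); [apply Phi_deriv|]|];
      auto_derive; try exact I; ring.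
  - intros x _; unfold K; pose proof (exp_ineq1_le (c * cos x)); lra.
Qed.

(* The double integral of the paper is 2 Psi: the inner integral is Phi a - Phi (a - th),
   whose integral over [0, th] is 2 Psi th by evenness of Psi. *)
Lemma inner_integral c x th :
  RInt (fun b => exp (c * cos (x - b))) 0 th = Phi c x - Phi c (x - th).
Proof.
  apply is_RInt_unique.
  replace (Phi c x - Phi c (x - th)) with
    (minus ((fun b => - Phi c (x - b)) th) ((fun b => - Phi c (x - b)) 0))
    by (unfold minus, plus, opp; simpl; rewrite Rminus_0_r; ring).
  apply (is_RInt_derive (fun b => - Phi c (x - b))).
  - intros y _.
    replace (exp (c * cos (x - y))) with (- (-1 * K c (x - y))) by (unfold K; ring).
    apply (is_derive_opp (fun b => Phi c (x - b))).
    apply (is_derive_comp (Phi c) (fun b => x - b)); [apply Phi_deriv|].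
    auto_derive; [exact I|ring].
  - intros y _; apply (continuous_comp (fun b => x - b) (K c)); [|apply K_cont].
    apply (ex_derive_continuous (K:=R_AbsRing) (V:=R_NormedModule)); auto_derive; exact I.
Qed.

Lemma double_integral c th :
  RInt (fun a => RInt (fun b => exp (c * cos (a - b))) 0 th) 0 th = 2 * Psi c th.
Proof.
  rewrite (RInt_ext _ (fun a => Phi c a - Phi c (a - th)))
    by (intros x _; apply inner_integral).
  apply is_RInt_unique.
  replace (2 * Psi c th) with
    (minus ((fun a => Psi c a - Psi c (a - th)) th) ((fun a => Psi c a - Psi c (a - th)) 0)).
  2:{ unfold minus, plus, opp; simpl; rewrite Rminus_diag, Rminus_0_l, Psi_even, Psi0; ring. }
  apply (is_RInt_derive (fun a => Psi c a - Psi c (a - th))).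
  - intros y _; apply (is_derive_minus (Psi c) (fun a => Psi c (a - th))); [apply Psi_deriv|].
    replace (Phi c (y - th)) with (1 * Phi c (y - th)) by ring.
    apply (is_derive_comp (Psi c) (fun a => a - th)); [apply Psi_deriv|].
    auto_derive; [exact I|ring].
  - intros y _; apply (continuous_minus (Phi c) (fun a => Phi c (a - th))); [apply Phi_cont|].
    apply (continuous_comp (fun a => a - th) (Phi c)); [|apply Phi_cont].
    apply (ex_derive_continuous (K:=R_AbsRing) (V:=R_NormedModule)); auto_derive; exact I.
Qed.

Lemma F_Psi c th : F c th = Psi c th / (2 * PI * Phi c PI) - (th / (2 * PI)) ^ 2.
Proof.
  unfold F; rewrite double_integral.
  change (RInt (fun a => exp (c * cos a)) 0 (2 * PI)) with (Phi c (2 * PI)).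
  rewrite Phi_2PI; pose proof (Phi_PI_ge c); pose proof PI_RGT_0.
  f_equal; field; lra.
Qed.

Section SecondDerivative.
Variables (f f1 f2 : R -> R).
Hypothesis f_deriv : forall z, is_derive f z (f1 z).
Hypothesis f1_deriv : forall z, is_derive f1 z (f2 z).

Lemma f1_nonincreasing p q x y : (forall z, p <= z <= q -> f2 z <= 0) ->
  p <= x -> x <= y -> y <= q -> f1 y <= f1 x.
Proof.
  intros Hs Hp Hxy Hq; apply (nonincreasing_of_deriv f1 f2 x y Hxy);
    [intros; apply f1_deriv|intros; apply Hs; lra].
Qed.

Lemma f1_nondecreasing p q x y : (forall z, p <= z <= q -> 0 <= f2 z) ->
  p <= x -> x <= y -> y <= q -> f1 x <= f1 y.
Proof.
  intros Hs Hp Hxy Hq; apply (nondecreasing_of_deriv f1 f2 x y Hxy);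
    [intros; apply f1_deriv|intros; apply Hs; lra].
Qed.

Lemma convex_le_endpoint p q t : (forall z, p <= z <= q -> 0 <= f2 z) ->
  p <= t <= q -> f t <= f p \/ f t <= f q.
Proof.
  intros Hs Ht; destruct (Rle_dec (f1 t) 0) as [Hneg|Hpos].
  - left; apply (nonincreasing_of_deriv f f1 p t); [lra|intros; apply f_deriv|].
    intros z Hz; assert (f1 z <= f1 t) by (apply (f1_nondecreasing p q z t Hs); lra); lra.
  - right; apply (nondecreasing_of_deriv f f1 t q); [lra|intros; apply f_deriv|].
    intros z Hz; assert (f1 t <= f1 z) by (apply (f1_nondecreasing p q t z Hs); lra); lra.
Qed.

Lemma concave_le_critical p q a t : (forall z, p <= z <= q -> f2 z <= 0) ->
  f1 a = 0 -> p <= a <= q -> p <= t <= q -> f t <= f a.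
Proof.
  intros Hs Ha Hpa Ht; destruct (Rle_dec t a).
  - apply (nondecreasing_of_deriv f f1 t a); [lra|intros; apply f_deriv|].
    intros z Hz; rewrite <- Ha; apply (f1_nonincreasing p q z a Hs); lra.
  - apply (nonincreasing_of_deriv f f1 a t); [lra|intros; apply f_deriv|].
    intros z Hz; rewrite <- Ha; apply (f1_nonincreasing p q a z Hs); lra.
Qed.

Lemma equal_increments p x y r : p <= x -> y <= r -> x - p = r - y ->
  exists z1 z2, p <= z1 <= x /\ y <= z2 <= r /\
    f x - f p = f1 z1 * (x - p) /\ f r - f y = f1 z2 * (x - p).
Proof.
  intros Hpx Hyr Hd.
  destruct (MVT_gen f p x f1) as [z1 [Hz1 E1]];
    [intros; apply f_deriv|intros; eapply continuity_pt_of_derive, f_deriv|].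
  destruct (MVT_gen f y r f1) as [z2 [Hz2 E2]];
    [intros; apply f_deriv|intros; eapply continuity_pt_of_derive, f_deriv|].
  rewrite Rmin_left, Rmax_right in Hz1, Hz2 by lra.
  exists z1, z2; split; [lra|split; [lra|split; [exact E1|rewrite Hd; exact E2]]].
Qed.

Lemma spread_convex p x y r : p <= x -> x <= y -> y <= r -> x - p = r - y ->
  (forall z, p <= z <= r -> 0 <= f2 z) -> f x + f y <= f p + f r.
Proof.
  intros Hpx Hxy Hyr Hd Hs.
  destruct (equal_increments p x y r) as (z1 & z2 & Hz1 & Hz2 & E1 & E2); try lra.
  assert (f1 z1 <= f1 z2) by (apply (f1_nondecreasing p r z1 z2 Hs); lra); nra.
Qed.

Lemma merge_concave x y : x <= y -> (forall z, x <= z <= y -> f2 z <= 0) ->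
  f x + f y <= 2 * f ((x + y) / 2).
Proof.
  intros Hxy Hs; set (m := (x + y) / 2).
  destruct (equal_increments x m m y) as (z1 & z2 & Hz1 & Hz2 & E1 & E2);
    try (unfold m; lra).
  assert (f1 z2 <= f1 z1) by (apply (f1_nonincreasing x y z1 z2 Hs); unfold m in *; lra).
  unfold m in *; nra.
Qed.

Lemma three_point_reduction b t1 t2 t3 : continuity f2 ->
  (forall x y, 0 <= x -> x <= y -> y <= b -> f2 y <= f2 x) ->
  0 <= t1 -> t1 <= t2 -> t2 <= t3 -> t3 <= b -> t1 + t2 + t3 = 2 * b ->
  exists t, 0 <= t <= b /\ f t1 + f t2 + f t3 <= f t + 2 * f (b - t / 2).
Proof.
  intros Hc Hdec H1 H2 H3 H4 Hs.
  destruct (Rle_dec (f2 t2) 0) as [C1|C1].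
  - exists t1; split; [lra|].
    assert (f t2 + f t3 <= 2 * f ((t2 + t3) / 2)).
    { apply merge_concave; [lra|]; intros z Hz; pose proof (Hdec t2 z); lra. }
    replace (b - t1 / 2) with ((t2 + t3) / 2) by lra; lra.
  - destruct (Rle_dec 0 (f2 t3)) as [C2|C2].
    + exists (t1 + t2 - t3); split; [lra|].
      assert (f t1 + f t2 <= f (t1 + t2 - t3) + f t3).
      { apply spread_convex; try lra; intros z Hz; pose proof (Hdec z t3); lra. }
      replace (b - (t1 + t2 - t3) / 2) with t3 by lra; lra.
    + destruct (IVT_gen f2 t2 t3 0 Hc) as [u [Hu Eu]];
        [rewrite Rmin_right, Rmax_left by lra; lra|].
      rewrite Rmin_left, Rmax_right in Hu by lra.
      exists (t1 + t2 - u); split; [lra|].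
      assert (f t1 + f t2 <= f (t1 + t2 - u) + f u).
      { apply spread_convex; try lra; intros z Hz; pose proof (Hdec z u); lra. }
      assert (f u + f t3 <= 2 * f ((u + t3) / 2)).
      { apply merge_concave; [lra|]; intros z Hz; pose proof (Hdec u z); lra. }
      replace (b - (t1 + t2 - u) / 2) with ((u + t3) / 2) by lra; lra.
Qed.

Lemma max_at_right_end a t : continuity f2 ->
  (forall x y, 0 <= x -> x <= y -> y <= a -> f2 y <= f2 x) ->
  f 0 <= f a -> f1 a = 0 -> 0 <= t <= a -> f t <= f a.
Proof.
  intros Hc Hdec H0a H1a Ht.
  (* once f'' <= 0 at u, f is concave on [u, a] and a is a critical point *)
  assert (Hright : forall u, 0 <= u <= a -> f2 u <= 0 -> forall s, u <= s <= a -> f s <= f a).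
  { intros u Hu Hs s Hst; apply (concave_le_critical u a); try lra.
    intros z Hz; pose proof (Hdec u z); lra. }
  destruct (Rle_dec (f2 0) 0) as [C1|C1]; [apply (Hright 0); lra|].
  destruct (Rle_dec 0 (f2 a)) as [C2|C2].
  - destruct (convex_le_endpoint 0 a t) as [E|E]; try lra.
    intros z Hz; pose proof (Hdec z a); lra.
  - destruct (IVT_gen f2 0 a 0 Hc) as [u [Hu Eu]];
      [rewrite Rmin_right, Rmax_left by lra; lra|].
    rewrite Rmin_left, Rmax_right in Hu by lra.
    destruct (Rle_dec u t); [apply (Hright u); lra|].
    assert (f u <= f a) by (apply (Hright u); lra).
    destruct (convex_le_endpoint 0 u t) as [E|E]; try lra.
    intros z Hz; pose proof (Hdec z u); lra.
Qed.
End SecondDerivative.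

Definition alpha : R := 2 * PI / 3.

Lemma cos_alpha : cos alpha = - 1 / 2.
Proof.
  unfold alpha; replace (2 * PI / 3) with (PI - PI / 3) by field.
  rewrite Rtrigo_facts.cos_pi_minus, cos_PI3; field.
Qed.

Lemma is_derive_reflect (g dg : R -> R) t : (forall z, is_derive g z (dg z)) ->
  is_derive (fun t => g (PI - t / 2)) t (- 1 / 2 * dg (PI - t / 2)).
Proof.
  intros Hg; apply (is_derive_comp g (fun t => PI - t / 2)); [apply Hg|].
  auto_derive; [exact I|field].
Qed.

(* For t in [0, alpha], the slope of K at t dominates a quarter of the slope at
   PI - t/2: writing s = sin (t/2) and x = cos (t/2) >= 1/2, this reads
   2 s x K(t) >= s K(PI - t/2)/4, and K(PI - t/2) <= K(t) since cos t >= - x. *)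
Lemma kernel_slope_comparison c t : 0 < c -> 0 <= t <= alpha ->
  - c * sin t * K c t + c / 4 * sin (PI - t / 2) * K c (PI - t / 2) <= 0.
Proof.
  unfold alpha; intros Hc Ht; pose proof PI_RGT_0.
  set (s := sin (t / 2)); set (x := cos (t / 2)).
  assert (Hs : 0 <= s) by (apply sin_ge_0; lra).
  assert (Hx : 1 / 2 <= x).
  { rewrite <- cos_PI3; unfold x; destruct (Req_dec (t / 2) (PI / 3)) as [E|E].
    - rewrite E; lra.
    - apply Rlt_le, cos_decreasing_1; lra. }
  assert (Hsin : sin t = 2 * s * x) by (unfold s, x; rewrite <- sin_2a; f_equal; field).
  assert (Hcos : cos t = 2 * x * x - 1) by (unfold x; rewrite <- cos_2a_cos; f_equal; field).
  rewrite sin_PI_x; fold s.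
  assert (HK : K c (PI - t / 2) <= K c t).
  { unfold K; rewrite Rtrigo_facts.cos_pi_minus, Hcos; fold x.
    apply exp_le_mono; assert (0 <= (2 * x - 1) * (x + 1)) by nra; nra. }
  pose proof (K_pos c t); pose proof (K_pos c (PI - t / 2)).
  rewrite Hsin.
  assert (0 <= c * s) by nra.
  assert (c * s * K c (PI - t / 2) <= c * s * K c t) by nra.
  assert (0 <= c * s * K c t) by nra.
  assert (c * s * K c t <= 2 * x * (c * s * K c t)) by nra.
  nra.
Qed.

(* The three-arc inequality for Psi with a quadratic penalty of weight mu, under two
   conditions on mu: it dominates the kernel near the equilateral point (mu_kernel), and
   the degenerate configuration (0, PI, PI) already satisfies the inequality (mu_ends).
   The proof studies G t = Psi t - Phi alpha t - mu (t - alpha)^2, whose second derivative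
   K - 2 mu is nonincreasing on [0, PI]: the smoothing argument reduces to configurations
   (t, PI - t/2, PI - t/2), and H t = G t + 2 G (PI - t/2) is maximal at t = alpha. *)
Section ThreeArcs.
Variables (c mu : R).
Hypothesis c_pos : 0 < c.
Hypothesis mu_kernel : exp (- c / 2) + 1 / 2 <= 3 * mu.
Hypothesis mu_ends : 2 * Psi c PI - 3 * Psi c alpha <= 2 * PI ^ 2 / 3 * mu.

Let G t := Psi c t - (Phi c alpha * t + mu * (t - alpha) ^ 2).
Let G1 t := Phi c t - (Phi c alpha + 2 * mu * (t - alpha)).
Let G2 t := K c t - 2 * mu.
Let H t := G t + 2 * G (PI - t / 2).
Let H1 t := G1 t - G1 (PI - t / 2).
Let H2 t := G2 t + G2 (PI - t / 2) / 2.

Let G_deriv t : is_derive G t (G1 t).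
Proof.
  apply (is_derive_minus (Psi c)); [apply Psi_deriv|].
  auto_derive; [exact I|ring].
Qed.

Let G1_deriv t : is_derive G1 t (G2 t).
Proof.
  unfold G2; replace (K c t - 2 * mu) with (K c t - (0 + 2 * mu * 1)) by ring.
  apply (is_derive_minus (Phi c)); [apply Phi_deriv|].
  auto_derive; [exact I|ring].
Qed.

Let G2_deriv t : is_derive G2 t (- c * sin t * K c t).
Proof.
  replace (- c * sin t * K c t) with (- c * sin t * K c t - 0) by ring.
  apply (is_derive_minus (K c)); [apply K_deriv|auto_derive; [exact I|ring]].
Qed.

Let H_deriv t : is_derive H t (H1 t).
Proof.
  replace (H1 t) with (G1 t + 2 * (-1 / 2 * G1 (PI - t / 2))) by (unfold H1; field).
  apply (is_derive_plus G); [apply G_deriv|].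
  apply (is_derive_scal (fun t => G (PI - t / 2)) t 2), is_derive_reflect, G_deriv.
Qed.

Let H1_deriv t : is_derive H1 t (H2 t).
Proof.
  replace (H2 t) with (G2 t - (-1 / 2 * G2 (PI - t / 2))) by (unfold H2; field).
  apply (is_derive_minus G1); [apply G1_deriv|].
  apply is_derive_reflect, G1_deriv.
Qed.

Let H2_deriv t : is_derive H2 t
  (- c * sin t * K c t + c / 4 * sin (PI - t / 2) * K c (PI - t / 2)).
Proof.
  replace (- c * sin t * K c t + c / 4 * sin (PI - t / 2) * K c (PI - t / 2))
    with (- c * sin t * K c t + / 2 * (-1 / 2 * (- c * sin (PI - t / 2) * K c (PI - t / 2))))
    by field.
  apply (is_derive_plus G2); [apply G2_deriv|].
  apply (is_derive_ext (K:=R_AbsRing) (V:=R_NormedModule) (fun t => / 2 * G2 (PI - t / 2)));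
    [intros s; simpl; field|].
  apply (is_derive_scal (fun t => G2 (PI - t / 2)) t (/ 2)).
  apply (is_derive_reflect G2 (fun z => - c * sin z * K c z)), G2_deriv.
Qed.

Let G2_cont : continuity G2.
Proof. intros x; exact (continuity_pt_of_derive _ _ _ (G2_deriv x)). Qed.

Let H2_cont : continuity H2.
Proof. intros x; exact (continuity_pt_of_derive _ _ _ (H2_deriv x)). Qed.

Let G2_nonincreasing x y : 0 <= x -> x <= y -> y <= PI -> G2 y <= G2 x.
Proof. intros; unfold G2; pose proof (K_decreasing c x y c_pos); lra. Qed.

Let H2_nonincreasing x y : 0 <= x -> x <= y -> y <= alpha -> H2 y <= H2 x.
Proof.
  intros Hx Hxy Hy.
  apply (nonincreasing_of_deriv H2
    (fun t => - c * sin t * K c t + c / 4 * sin (PI - t / 2) * K c (PI - t / 2)) x y Hxy);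
    [intros; apply H2_deriv|].
  intros z Hz; apply kernel_slope_comparison; [exact c_pos|lra].
Qed.

(* Beyond alpha, H is concave: this is where mu_kernel is used. *)
Let H2_nonpos t : alpha <= t <= PI -> H2 t <= 0.
Proof.
  intros Ht; pose proof PI_RGT_0; unfold alpha in *; unfold H2, G2.
  assert (K c t <= K c alpha) by (apply K_decreasing; unfold alpha; lra).
  assert (K c (PI - t / 2) <= K c (PI / 2)) by (apply K_decreasing; lra).
  assert (K c (PI / 2) = 1) by (unfold K; rewrite cos_PI2, Rmult_0_r, exp_0; reflexivity).
  assert (K c alpha = exp (- c / 2)) by (unfold K; rewrite cos_alpha; f_equal; field).
  lra.
Qed.

Let H_alpha : H alpha = 3 * G alpha.
Proof. unfold H; replace (PI - alpha / 2) with alpha by (unfold alpha; field); ring. Qed.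

Let H1_alpha : H1 alpha = 0.
Proof. unfold H1; replace (PI - alpha / 2) with alpha by (unfold alpha; field); ring. Qed.

(* The endpoint comparison H 0 <= H alpha is exactly mu_ends. *)
Let H_0_le : H 0 <= H alpha.
Proof.
  rewrite H_alpha; unfold H, G; replace (PI - 0 / 2) with PI by field.
  rewrite Psi0; unfold alpha in *; lra.
Qed.

Let H_le t : 0 <= t <= PI -> H t <= H alpha.
Proof.
  intros Ht; pose proof PI_RGT_0; destruct (Rle_dec t alpha) as [Hta|Hta].
  - apply (max_at_right_end H H1 H2 H_deriv H1_deriv alpha t H2_cont H2_nonincreasing
             H_0_le H1_alpha); lra.
  - apply Rnot_le_lt in Hta.
    apply (concave_le_critical H H1 H2 H_deriv H1_deriv alpha PI alpha t);
      [intros z Hz; apply H2_nonpos; lra|exact H1_alpha|unfold alpha; lra|lra].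
Qed.

Let G_sum_sorted t1 t2 t3 : 0 <= t1 -> t1 <= t2 -> t2 <= t3 -> t3 <= PI ->
  t1 + t2 + t3 = 2 * PI -> G t1 + G t2 + G t3 <= 3 * G alpha.
Proof.
  intros; destruct (three_point_reduction G G1 G2 G_deriv G1_deriv PI t1 t2 t3)
    as [t [Ht E]]; auto.
  rewrite <- H_alpha; pose proof (H_le t Ht); unfold H in *; lra.
Qed.

Lemma Psi_three_arcs t1 t2 t3 : 0 <= t1 -> 0 <= t2 -> 0 <= t3 ->
  t1 <= PI -> t2 <= PI -> t3 <= PI -> t1 + t2 + t3 = 2 * PI ->
  Psi c t1 + Psi c t2 + Psi c t3 - 3 * Psi c alpha
  <= mu * ((t1 - alpha) ^ 2 + (t2 - alpha) ^ 2 + (t3 - alpha) ^ 2).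
Proof.
  intros.
  assert (S : G t1 + G t2 + G t3 <= 3 * G alpha).
  { destruct (Rle_dec t1 t2), (Rle_dec t2 t3), (Rle_dec t1 t3);
      [ apply G_sum_sorted
      | apply G_sum_sorted
      | pose proof (G_sum_sorted t1 t3 t2)
      | pose proof (G_sum_sorted t3 t1 t2)
      | pose proof (G_sum_sorted t2 t1 t3)
      | pose proof (G_sum_sorted t2 t3 t1)
      | pose proof (G_sum_sorted t2 t1 t3)
      | pose proof (G_sum_sorted t3 t2 t1) ]; lra. }
  unfold G in S; unfold alpha in *; nra.
Qed.
End ThreeArcs.

(* Indeed, since K' = - c sin K, the functions
     u Phi u - Psi u - lam Phi u - zL u K u                on [0, alpha],
     2 (PI - u) Phi u + 2 Psi u - lam Phi u - zR u K u     on [alpha, PI]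
   have derivative K times the (nonpositive) left-hand sides, so they are nonincreasing;
   adding the two comparisons gives the claim because 2 (PI - alpha) = alpha. *)
Lemma calibration c lam (zL dzL zR dzR : R -> R) :
  (forall u, is_derive zL u (dzL u)) -> (forall u, is_derive zR u (dzR u)) ->
  (forall u, 0 <= u <= alpha -> u - lam - dzL u + c * zL u * sin u <= 0) ->
  (forall u, alpha <= u <= PI -> 2 * (PI - u) - lam - dzR u + c * zR u * sin u <= 0) ->
  zL 0 = 0 -> zL alpha <= zR alpha -> zR PI <= 0 ->
  2 * Psi c PI - 3 * Psi c alpha <= lam * Phi c PI.
Proof.
  intros HL HR CL CR L0 LR R0.
  assert (Hpa : 0 < alpha < PI) by (unfold alpha; pose proof PI_RGT_0; lra).
  assert (Hd : forall u, ex_derive (Phi c) u /\ ex_derive (Psi c) u /\ ex_derive (K c) u /\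
                         ex_derive zL u /\ ex_derive zR u).
  { intros u; repeat split; eexists;
      [apply Phi_deriv|apply Psi_deriv|apply K_deriv|apply HL|apply HR]. }
  assert (Left : alpha * Phi c alpha - Psi c alpha - lam * Phi c alpha - zL alpha * K c alpha
                 <= 0 * Phi c 0 - Psi c 0 - lam * Phi c 0 - zL 0 * K c 0).
  { apply (nonincreasing_of_deriv (fun u => u * Phi c u - Psi c u - lam * Phi c u - zL u * K c u)
      (fun u => K c u * (u - lam - dzL u + c * zL u * sin u))); [lra| |].
    - intros u _; destruct (Hd u) as (D1 & D2 & D3 & D4 & _).
      auto_derive; [repeat split; assumption|].
      rewrite (Derive_of _ _ _ (Phi_deriv c u)), (Derive_of _ _ _ (Psi_deriv c u)),
        (Derive_of _ _ _ (K_deriv c u)), (Derive_of _ _ _ (HL u)); ring.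
    - intros u Hu; pose proof (K_pos c u); specialize (CL u Hu); nra. }
  assert (Right : 2 * (PI - PI) * Phi c PI + 2 * Psi c PI - lam * Phi c PI - zR PI * K c PI
    <= 2 * (PI - alpha) * Phi c alpha + 2 * Psi c alpha - lam * Phi c alpha - zR alpha * K c alpha).
  { apply (nonincreasing_of_deriv
      (fun u => 2 * (PI - u) * Phi c u + 2 * Psi c u - lam * Phi c u - zR u * K c u)
      (fun u => K c u * (2 * (PI - u) - lam - dzR u + c * zR u * sin u))); [lra| |].
    - intros u _; destruct (Hd u) as (D1 & D2 & D3 & _ & D5).
      auto_derive; [repeat split; assumption|].
      rewrite (Derive_of _ _ _ (Phi_deriv c u)), (Derive_of _ _ _ (Psi_deriv c u)),
        (Derive_of _ _ _ (K_deriv c u)), (Derive_of _ _ _ (HR u)); ring.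
    - intros u Hu; pose proof (K_pos c u); specialize (CR u Hu); nra. }
  rewrite Phi0, Psi0, L0 in Left.
  pose proof (K_pos c PI); pose proof (K_pos c alpha).
  assert (zR PI * K c PI <= 0) by nra.
  assert (zL alpha * K c alpha <= zR alpha * K c alpha) by nra.
  replace (2 * (PI - alpha)) with alpha in Right by (unfold alpha; field).
  lra.
Qed.

(* Certificate polynomials found numerically, and the polynomial inequalities they must
   satisfy, each certified by [pos_check] with 12 bisection levels. Rational bounds used:
   3.1415 < PI < 3.1416, 2.0943 < alpha < 2.0945, 1.0471666 < PI/3,
   2.0943333 < 2 PI/3, 0.8817143 < 0.842 PI/3, 0.1051 PI/3 < 0.11006072. *)
Open Scope Q_scope.
Definition sin11 : list Q := sin_poly 5.
Definition sin13 : list Q := sin_poly 6.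

(* Regime c >= 3/2: a single certificate z_large u = u * q_large u, nonpositive on [0, PI]. *)
Definition q_large : list Q :=
  [-80191 # 100000; 2793 # 4000; -3081 # 4000; 39729 # 100000; -6291 # 100000].
Definition z_large : list Q := 0%Q :: q_large.
Definition large_left : list Q :=
  padd (pderiv z_large) (padd [8817143 # 10000000; -1] (pscale (-3 # 2) (pmul z_large sin11))).
Definition large_right : list Q :=
  padd (pderiv z_large) (padd [-54014857 # 10000000; 2] (pscale (-3 # 2) (pmul z_large sin11))).

(* Regime c <= 3/2: the certificates are -u (PI/3 - u/2) + c z_left u on [0, alpha] and
   (u - alpha) (PI - u) + c z_right u on [alpha, PI]. *)
Definition z_left : list Q :=
  [0; 14117 # 100000; 5379 # 50000; -50573 # 100000; 26443 # 100000; -723 # 20000].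
Definition z_right : list Q :=
  [108273 # 20000; -610067 # 100000; 77139 # 100000; 117209 # 100000; -11907 # 25000;
   529 # 10000].
Definition small_left : list Q :=
  padd (pderiv z_left) (padd [-11006072 # 100000000]
                           (pmul [0; 10471666 # 10000000; -1 # 2] sin11)).
Definition small_left' : list Q := padd small_left (pscale (-3 # 2) (0%Q :: z_left)).
Definition small_right : list Q :=
  padd (pderiv z_right) (padd [-11006072 # 100000000]
     (pscale (-1) (pmul (pmul [-20943333 # 10000000; 1] [31416 # 10000; -1]) sin13))).
Definition small_right' : list Q := padd small_right (pscale (-3 # 2) (0%Q :: z_right)).
Close Scope Q_scope.

Lemma check_q_large : pos_check 12 (pscale (-1) q_large) 0 (31416 # 10000) = true.
Proof. vm_compute; reflexivity. Qed.
Lemma check_large_left : pos_check 12 large_left 0 (20945 # 10000) = true.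
Proof. vm_compute; reflexivity. Qed.
Lemma check_large_right : pos_check 12 large_right (20943 # 10000) (31416 # 10000) = true.
Proof. vm_compute; reflexivity. Qed.
Lemma check_small_left : pos_check 12 small_left 0 (20945 # 10000) = true.
Proof. vm_compute; reflexivity. Qed.
Lemma check_small_left' : pos_check 12 small_left' 0 (20945 # 10000) = true.
Proof. vm_compute; reflexivity. Qed.
Lemma check_small_right : pos_check 12 small_right (20943 # 10000) (31416 # 10000) = true.
Proof. vm_compute; reflexivity. Qed.
Lemma check_small_right' : pos_check 12 small_right' (20943 # 10000) (31416 # 10000) = true.
Proof. vm_compute; reflexivity. Qed.
Lemma check_junction : pos_check 12 (padd z_right (pscale (-1) z_left))
                         (20943 # 10000) (20945 # 10000) = true.
Proof. vm_compute; reflexivity. Qed.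
Lemma check_z_right_PI : pos_check 12 (pscale (-1) z_right) (31415 # 10000) (31416 # 10000) = true.
Proof. vm_compute; reflexivity. Qed.
Lemma check_sin11 : pos_check 12 (tl sin11) 0 (20945 # 10000) = true.
Proof. vm_compute; reflexivity. Qed.

Lemma sine_bounds u : 0 <= u <= PI ->
  0 <= sin u <= u /\ peval sin11 u <= sin u <= peval sin13 u.
Proof.
  intros Hu; pose proof PI_bounds; split; [split|].
  - apply sin_ge_0; lra.
  - destruct (proj1 Hu) as [Hpos|<-]; [apply Rlt_le, sin_lt_x, Hpos|rewrite sin_0; lra].
  - exact (sin_taylor_bounds 2 u ltac:(lra)).
Qed.

Lemma sin11_nonneg u : 0 <= u <= 2.0945 -> 0 <= peval sin11 u.
Proof.
  intros Hu; replace sin11 with (0%Q :: tl sin11) by (vm_compute; reflexivity).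
  pose proof (pos_check_correct _ _ _ _ check_sin11 u ltac:(lra)); cbn [peval].
  rewrite RMicromega.Q2R_0; nra.
Qed.

Lemma alpha_bounds : 2.0943 < alpha < 2.0945.
Proof. pose proof PI_bounds; unfold alpha; lra. Qed.

Lemma z_large_nonpos u : 0 <= u <= PI -> peval z_large u <= 0.
Proof.
  intros Hu; pose proof PI_bounds.
  pose proof (pos_check_correct _ _ _ _ check_q_large u ltac:(lra)) as P.
  rewrite peval_scale in P; unfold z_large; cbn [peval].
  rewrite RMicromega.Q2R_0; nra.
Qed.

Lemma large_c_bound c : 3 / 2 <= c ->
  2 * Psi c PI - 3 * Psi c alpha <= 0.842 * PI / 3 * Phi c PI.
Proof.
  intros Hc; pose proof PI_bounds; pose proof alpha_bounds.
  assert (Hz : forall u, 0 <= u <= PI ->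
            c * peval z_large u * sin u <= 3 / 2 * peval z_large u * peval sin11 u).
  { intros u Hu; pose proof (z_large_nonpos u Hu).
    destruct (sine_bounds u Hu) as [[S0 _] [S11 _]].
    assert (peval z_large u * sin u <= 0) by nra.
    assert (peval z_large u * (sin u - peval sin11 u) <= 0) by nra.
    nra. }
  apply (calibration c _ (peval z_large) (peval (pderiv z_large))
                         (peval z_large) (peval (pderiv z_large)));
    try (intros; apply is_derive_peval).
  - intros u Hu; specialize (Hz u ltac:(lra)).
    pose proof (pos_check_correct _ _ _ _ check_large_left u ltac:(lra)) as P.
    unfold large_left in P; expand_peval P.
    lra.
  - intros u Hu; specialize (Hz u ltac:(lra)).
    pose proof (pos_check_correct _ _ _ _ check_large_right u ltac:(lra)) as P.
    unfold large_right in P; expand_peval P.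
    lra.
  - unfold z_large; cbn [peval]; rewrite RMicromega.Q2R_0; ring.
  - lra.
  - apply z_large_nonpos; lra.
Qed.

(* The differential inequalities
   reduce to c times a bracket in which c enters only through c z sin u; it is bounded
   according to the sign of z, using sin u <= u. *)
Lemma sign_split_bound c z s A B : 0 < c <= 3 / 2 -> 0 <= s <= B ->
  (z <= 0 -> 0 < A) -> (0 < z -> 0 < A - 3 / 2 * B * z) -> c * z * s < A.
Proof.
  intros Hc Hs HA HB; destruct (Rle_dec z 0) as [Z|Z].
  - specialize (HA Z); assert (z * s <= 0) by nra; nra.
  - apply Rnot_le_lt in Z; specialize (HB Z).
    assert (0 <= z * s <= z * B) by (split; nra); nra.
Qed.

Lemma small_left_bracket c u : 0 < c <= 3 / 2 -> 0 <= u <= alpha ->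
  0.1051 * PI / 3 - peval (pderiv z_left) u - u * (PI / 3 - u / 2) * sin u
    + c * peval z_left u * sin u <= 0.
Proof.
  intros Hc Hu; pose proof PI_bounds; pose proof alpha_bounds.
  destruct (sine_bounds u ltac:(lra)) as [[S0 Su] [S11 _]].
  pose proof (sin11_nonneg u ltac:(lra)).
  set (A := peval (pderiv z_left) u - 0.11006072 + u * (1.0471666 - u / 2) * peval sin11 u).
  assert (HA : A <= peval (pderiv z_left) u - 0.1051 * PI / 3 + u * (PI / 3 - u / 2) * sin u).
  { unfold A, alpha in *.
    assert (0 <= u * (PI / 3 - u / 2)) by nra.
    assert (u * (1.0471666 - u / 2) * peval sin11 u <= u * (PI / 3 - u / 2) * peval sin11 u)
      by (apply Rmult_le_compat_r; nra).
    assert (u * (PI / 3 - u / 2) * peval sin11 u <= u * (PI / 3 - u / 2) * sin u)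
      by (apply Rmult_le_compat_l; lra).
    lra. }
  assert (P1 := pos_check_correct _ _ _ _ check_small_left u ltac:(lra)).
  assert (P2 := pos_check_correct _ _ _ _ check_small_left' u ltac:(lra)).
  unfold small_left', small_left in P1, P2.
  expand_peval P1; expand_peval P2.
  assert (c * peval z_left u * sin u < A)
    by (apply (sign_split_bound c _ _ A u); unfold A; intros; lra).
  lra.
Qed.

Lemma small_right_bracket c u : 0 < c <= 3 / 2 -> alpha <= u <= PI ->
  0.1051 * PI / 3 - peval (pderiv z_right) u + (u - alpha) * (PI - u) * sin u
    + c * peval z_right u * sin u <= 0.
Proof.
  intros Hc Hu; pose proof PI_bounds; pose proof alpha_bounds.
  destruct (sine_bounds u ltac:(lra)) as [[S0 Su] [_ S13]].
  set (A := peval (pderiv z_right) u - 0.11006072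
            - (u - 2.0943333) * (3.1416 - u) * peval sin13 u).
  assert (HA : A <= peval (pderiv z_right) u - 0.1051 * PI / 3 - (u - alpha) * (PI - u) * sin u).
  { unfold A, alpha in *.
    assert (0 <= (u - 2 * PI / 3) * (PI - u) <= (u - 2.0943333) * (3.1416 - u)) by (split; nra).
    assert ((u - 2 * PI / 3) * (PI - u) * sin u <= (u - 2 * PI / 3) * (PI - u) * peval sin13 u)
      by (apply Rmult_le_compat_l; lra).
    assert ((u - 2 * PI / 3) * (PI - u) * peval sin13 u
            <= (u - 2.0943333) * (3.1416 - u) * peval sin13 u)
      by (apply Rmult_le_compat_r; lra).
    lra. }
  assert (P1 := pos_check_correct _ _ _ _ check_small_right u ltac:(lra)).
  assert (P2 := pos_check_correct _ _ _ _ check_small_right' u ltac:(lra)).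
  unfold small_right', small_right in P1, P2.
  expand_peval P1; expand_peval P2.
  assert (c * peval z_right u * sin u < A)
    by (apply (sign_split_bound c _ _ A u); unfold A; intros; lra).
  lra.
Qed.

Lemma is_derive_perturbed (g dg : R -> R) c p u : is_derive g u (dg u) ->
  is_derive (fun u => g u + c * peval p u) u (dg u + c * peval (pderiv p) u).
Proof.
  intros Hg; apply (is_derive_plus g); [exact Hg|].
  apply is_derive_scal, is_derive_peval.
Qed.

Lemma small_c_bound c : 0 < c <= 3 / 2 ->
  2 * Psi c PI - 3 * Psi c alpha <= PI / 3 * (1 - 0.1051 * c) * Phi c PI.
Proof.
  intros Hc; pose proof PI_bounds; pose proof alpha_bounds.
  apply (calibration c _
    (fun u => - (u * (PI / 3 - u / 2)) + c * peval z_left u)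
    (fun u => - (PI / 3 - u) + c * peval (pderiv z_left) u)
    (fun u => (u - alpha) * (PI - u) + c * peval z_right u)
    (fun u => (PI - u) - (u - alpha) + c * peval (pderiv z_right) u)).
  - intros u.
    apply (is_derive_perturbed (fun u => - (u * (PI / 3 - u / 2)))
                                          (fun u => - (PI / 3 - u))).
    auto_derive; [exact I|field].
  - intros u.
    apply (is_derive_perturbed (fun u => (u - alpha) * (PI - u))
                                          (fun u => (PI - u) - (u - alpha))).
    auto_derive; [exact I|field].
  - intros u Hu; pose proof (small_left_bracket c u Hc Hu); nra.
  - intros u Hu; pose proof (small_right_bracket c u Hc Hu); unfold alpha in *; nra.
  - cbn [peval z_left]; rewrite RMicromega.Q2R_0; ring.
  - pose proof (pos_check_correct _ _ _ _ check_junction alpha ltac:(lra)) as P.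
    rewrite peval_add, peval_scale in P.
    assert (alpha * (PI / 3 - alpha / 2) = 0) by (unfold alpha; field); nra.
  - pose proof (pos_check_correct _ _ _ _ check_z_right_PI PI ltac:(lra)) as P.
    rewrite peval_scale in P; nra.
Qed.

Definition deficit (c : R) : R := Rmin (0.1051 * c) 0.158.

Lemma key_integral_bound c : 0 < c ->
  2 * Psi c PI - 3 * Psi c alpha <= PI / 3 * (1 - deficit c) * Phi c PI.
Proof.
  intros Hc; pose proof (Phi_PI_ge c); pose proof PI_bounds.
  assert (Hpos : 0 <= PI / 3 * Phi c PI) by nra.
  unfold deficit; destruct (Rle_dec c (3 / 2)) as [Hsmall|Hlarge].
  - pose proof (small_c_bound c (conj Hc Hsmall)).
    pose proof (Rmin_l (0.1051 * c) 0.158); nra.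
  - pose proof (large_c_bound c ltac:(lra)).
    pose proof (Rmin_r (0.1051 * c) 0.158); nra.
Qed.

(* e^(-c/2) (1 + c/2) <= 1 controls e^(-c/2) in both regimes. *)
Lemma exp_deficit_bound c : 0 < c -> exp (- c / 2) + 1 / 2 <= 3 / 2 * (1 - deficit c).
Proof.
  intros Hc.
  assert (Hprod : exp (- c / 2) * (1 + c / 2) <= 1).
  { assert (E : exp (- c / 2) * exp (c / 2) = 1)
      by (rewrite <- exp_plus; replace (- c / 2 + c / 2) with 0 by field; apply exp_0).
    pose proof (exp_ineq1_le (c / 2)); pose proof (exp_pos (- c / 2)); nra. }
  pose proof (exp_pos (- c / 2)); unfold deficit.
  destruct (Rle_dec c (3 / 2)) as [Hsmall|Hlarge].
  - rewrite Rmin_left by lra.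
    assert (1 <= (1 + c / 2) * (1 - 3 / 2 * 0.1051 * c)) by nra.
    assert (exp (- c / 2) <= 1 - 3 / 2 * 0.1051 * c)
      by (apply (Rmult_le_reg_r (1 + c / 2)); nra).
    lra.
  - pose proof (Rmin_r (0.1051 * c) 0.158); nra.
Qed.

Lemma F_three_arcs c m t1 t2 t3 : 0 < c -> m <= 1 ->
  exp (- c / 2) + 1 / 2 <= 3 / 2 * (1 - m) ->
  2 * Psi c PI - 3 * Psi c alpha <= PI / 3 * (1 - m) * Phi c PI ->
  0 <= t1 -> 0 <= t2 -> 0 <= t3 -> t1 + t2 + t3 = 2 * PI ->
  t1 <= PI -> t2 <= PI -> t3 <= PI ->
  - 3 * F c (2 * PI / 3) + (F c t1 + F c t2 + F c t3)
  <= - m * ((t1 / (2 * PI) - 1/3) ^ 2 + (t2 / (2 * PI) - 1/3) ^ 2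
            + (t3 / (2 * PI) - 1/3) ^ 2).
Proof.
  intros Hc Hm Hexp Hkey H1 H2 H3 Hs U1 U2 U3.
  pose proof PI_RGT_0; pose proof (Phi_PI_ge c).
  set (P := Phi c PI) in *; set (mu := (1 - m) * P / (2 * PI)).
  assert (Hmu : (1 - m) / 2 <= mu).
  { unfold mu; apply (Rmult_le_reg_r (2 * PI)); [lra|].
    replace ((1 - m) * P / (2 * PI) * (2 * PI)) with ((1 - m) * P) by (field; lra); nra. }
  assert (S := Psi_three_arcs c mu Hc ltac:(lra)
                 ltac:(unfold mu; replace (2 * PI ^ 2 / 3 * ((1 - m) * P / (2 * PI)))
                         with (PI / 3 * (1 - m) * P) by (field; lra); exact Hkey)
                 t1 t2 t3 H1 H2 H3 U1 U2 U3 Hs).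
  set (D := Psi c t1 + Psi c t2 + Psi c t3 - 3 * Psi c alpha) in S.
  set (Q := (t1 - alpha) ^ 2 + (t2 - alpha) ^ 2 + (t3 - alpha) ^ 2) in S.
  rewrite !F_Psi; fold P.
  assert (Ht3 : t3 = 2 * PI - t1 - t2) by lra.
  assert (E : - 3 * (Psi c (2 * PI / 3) / (2 * PI * P) - (2 * PI / 3 / (2 * PI)) ^ 2)
      + (Psi c t1 / (2 * PI * P) - (t1 / (2 * PI)) ^ 2 + (Psi c t2 / (2 * PI * P)
      - (t2 / (2 * PI)) ^ 2) + (Psi c t3 / (2 * PI * P) - (t3 / (2 * PI)) ^ 2))
      = D / (2 * PI * P) - ((t1 / (2 * PI) - 1/3) ^ 2 + (t2 / (2 * PI) - 1/3) ^ 2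
                            + (t3 / (2 * PI) - 1/3) ^ 2)).
  { unfold D, alpha; rewrite Ht3; field; lra. }
  assert (EQ : mu * Q / (2 * PI * P) = (1 - m) * ((t1 / (2 * PI) - 1/3) ^ 2
                 + (t2 / (2 * PI) - 1/3) ^ 2 + (t3 / (2 * PI) - 1/3) ^ 2)).
  { unfold mu, Q, alpha; field; lra. }
  assert (D / (2 * PI * P) <= mu * Q / (2 * PI * P)).
  { apply Rmult_le_compat_r; [apply Rlt_le, Rinv_0_lt_compat; nra|exact S]. }
  lra.
Qed.

(* 3^(4/3) = 81^(1/3) lies in [4.325, 5]. *)
Lemma Rpower_3_4_3_bounds : 4.325 <= Rpower 3 (4 / 3) <= 5.
Proof.
  set (x := Rpower 3 (4 / 3)).
  assert (Hx : 0 < x) by apply exp_pos.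
  assert (E : x ^ 3 = 81).
  { rewrite <- Rpower_pow by exact Hx; unfold x; rewrite Rpower_mult.
    replace (4 / 3 * INR 3) with (INR 4) by (simpl; field).
    rewrite Rpower_pow by lra; simpl; field. }
  simpl in E; split; apply Rnot_lt_le; intro H.
  - assert (x * x <= 4.325 * 4.325) by nra.
    assert (x * (x * x) <= 4.325 * (4.325 * 4.325)) by nra; nra.
  - assert (5 * 5 <= x * x) by nra.
    assert (5 * (5 * 5) <= x * (x * x)) by nra; nra.
Qed.

(* The constant of the paper is at most the deficit: with k = 3^(4/3)/5 in [0.865, 1],
   it is at most 0.158, and by e^t >= 1 + t at most 0.158 (1/2 - k/3) PI c <= 0.1051 c. *)
Lemma paper_constant_le_deficit c : 0 < c ->
  - (0.158 * (-1 + (1 - Rpower 3 (4/3) / 5) * exp (- c * PI / 2)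
              + Rpower 3 (4/3) / 5 * exp (- c * PI / 6))) <= deficit c.
Proof.
  intros Hc; pose proof Rpower_3_4_3_bounds; pose proof PI_bounds.
  set (k := Rpower 3 (4/3) / 5).
  assert (Hk : 0.865 <= k <= 1) by (unfold k; lra).
  pose proof (exp_ineq1_le (- c * PI / 2)); pose proof (exp_ineq1_le (- c * PI / 6)).
  pose proof (exp_pos (- c * PI / 2)); pose proof (exp_pos (- c * PI / 6)).
  unfold deficit; apply Rmin_glb.
  - assert ((1 - k) * (1 - c * PI / 2) <= (1 - k) * exp (- c * PI / 2)) by nra.
    assert (k * (1 - c * PI / 6) <= k * exp (- c * PI / 6)) by nra.
    assert (0 < c * PI) by nra.
    assert (c * PI * (1 / 2 - k / 3) <= c * PI * (1 / 2 - 0.865 / 3)) by nra.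
    assert (c * PI * (1 / 2 - 0.865 / 3) <= c * 3.1416 * (1 / 2 - 0.865 / 3)) by nra.
    lra.
  - assert (0 <= (1 - k) * exp (- c * PI / 2)) by nra.
    assert (0 <= k * exp (- c * PI / 6)) by nra.
    lra.
Qed.

Theorem lemma3p3 (c t1 t2 t3 : R) :
  0 < c ->
  0 <= t1 -> 0 <= t2 -> 0 <= t3 ->
  t1 + t2 + t3 = 2 * PI ->
  t1 <= PI -> t2 <= PI -> t3 <= PI ->
  - 3 * F c (2 * PI / 3) + (F c t1 + F c t2 + F c t3)
  <= 0.158 * (-1 + (1 - Rpower 3 (4/3) / 5) * exp (- c * PI / 2)
                + Rpower 3 (4/3) / 5 * exp (- c * PI / 6))
     * ((t1 / (2 * PI) - 1/3) ^ 2 + (t2 / (2 * PI) - 1/3) ^ 2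
        + (t3 / (2 * PI) - 1/3) ^ 2).
Proof.
  intros Hc H1 H2 H3 Hs U1 U2 U3.
  assert (Hm : deficit c <= 1) by (unfold deficit; pose proof (Rmin_r (0.1051 * c) 0.158); lra).
  pose proof (F_three_arcs c (deficit c) t1 t2 t3 Hc Hm (exp_deficit_bound c Hc)
                (key_integral_bound c Hc) H1 H2 H3 Hs U1 U2 U3) as Hdef.
  pose proof (paper_constant_le_deficit c Hc) as Hconst.
  set (S := (t1 / (2 * PI) - 1/3) ^ 2 + (t2 / (2 * PI) - 1/3) ^ 2
            + (t3 / (2 * PI) - 1/3) ^ 2) in *.
  assert (0 <= S) by (unfold S; repeat apply Rplus_le_le_0_compat; apply pow2_ge_0).
  nra.
Qed.
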